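(* Let $d\ge1$, $s\in(0,1)$ and $0<\lambda\le\Lambda$. There exist $C>0$ and $\gamma>0$, depending only on $d,s,\lambda,\Lambda$, with the following property. Let $K:\mathbb{R}^d\to\mathbb{R}$ be a measurable kernel with $\lambda|y|^{-d-s}\le K(y)\le\Lambda|y|^{-d-s}$ and $K(y)=K(-y)$ for all $y\ne0$. Let $E\subset\mathbb{R}^d$ be a Borel set, $x\in\partial E$ and $r>0$. If $|E\cap B_r(x)|\le\gamma|B_r|$, then \[ \int_{B_r(x)\setminus B_{r/2}(x)}\tilde\chi_E(y)K(x-y)\,dy\ge\frac{C}{r^s}. \]
   Context: $B_\rho(x)$ is the open ball of radius $\rho$ centred at $x$, $B_\rho=B_\rho(0)$, and $|F|$ denotes Lebesgue measure. $\tilde\chi_E=\chi_{\mathbb{R}^d\setminus E}-\chi_E$. *)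

(* Euclidean space R^d is modelled as d.-tuple R,
   with the product (= Borel) sigma-algebra provided by MathComp-Analysis. *)
From HB Require Import structures.
From mathcomp Require Import all_boot all_order all_algebra.
From mathcomp Require Import all_classical all_reals all_analysis.
Set Implicit Arguments. Unset Strict Implicit. Unset Printing Implicit Defensive.
Import Order.TTheory GRing.Theory Num.Theory.
Local Open Scope classical_set_scope.
Local Open Scope ring_scope.

Section Rd.
Variable R : realType.

Definition tsub d (x y : d.-tuple R) : d.-tuple R :=
  [tuple tnth x i - tnth y i | i < d].

Definition enorm d (x : d.-tuple R) : R :=
  Num.sqrt (\sum_(i < d) tnth x i ^+ 2).

Definition eball d (x : d.-tuple R) (rho : R) : set (d.-tuple R) :=
  [set y | enorm (tsub y x) < rho].

Definition tzero d : d.-tuple R := [tuple 0 | _ < d].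

(* Lebesgue measure on R^d (on Borel sets), defined as iterated product of
   the one-dimensional Lebesgue measure (Tonelli):
   leb_0 = Dirac mass at the unique point of R^0,
   leb_{n+1}(A) = \int_R leb_n({t | (x :: t) \in A}) dx. *)
Fixpoint lebRd (n : nat) : set (n.-tuple R) -> \bar R :=
  match n with
  | 0 => fun A => \d_([tuple] : 0.-tuple R) A
  | n'.+1 => fun A =>
      (\int[@lebesgue_measure R]_x @lebRd n' [set t | A (@cons_tuple n' R (x : R) t)])%E
  end.

Definition eboundary d (E : set (d.-tuple R)) : set (d.-tuple R) :=
  [set x | forall rho : R, 0 < rho ->
     (exists2 y, E y & eball x rho y) /\ (exists2 y, ~ E y & eball x rho y)].

Definition tchi d (E : set (d.-tuple R)) (y : d.-tuple R) : R :=
  if `[< E y >] then -1 else 1.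

End Rd.

(* On the annulus B_r(x) \ B_{r/2}(x) the kernel value K(x - y)
   lies between b = lam r^{-d-s} and a = Lam 2^{d+s} r^{-d-s}.  The integrand
   tchi_E(y) K(x - y) is therefore at least b off E and at least -a on E, so
   the integral is at least b |annulus| - (a + b) |E ∩ annulus|.  The annulus
   contains a cube of side r/(4d), hence has measure at least (r/(4d))^d,
   while |E ∩ annulus| <= gamma |B_r| <= gamma (2r)^d.  For gamma small
   enough the first term wins and what is left is a multiple of r^{-s}. *)

From HB Require Import structures.
From mathcomp Require Import all_boot all_order all_algebra.
From mathcomp Require Import all_classical all_reals all_analysis.
From mathcomp Require Import measurable_realfun ring lra.
Import Order.TTheory GRing.Theory Num.Theory.
Local Open Scope classical_set_scope.
Local Open Scope ring_scope.
Set Implicit Arguments. Unset Strict Implicit. Unset Printing Implicit Defensive.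

Section sigma_finite_measure_of_axioms.
Context d (T : measurableType d) (R : realType).

Definition sigma_finite_measure_axioms (mu : set T -> \bar R) :=
  [/\ mu set0 = 0%E, forall A, (0 <= mu A)%E, semi_sigma_additive mu
    & sigma_finite setT mu].

(* A transparent alias carrying the measure structure: it lets the induction
   building lebRd use the product measure in the previous dimension before
   lebRd itself is known to be a measure. *)
Definition measure_of_axioms mu (_ : sigma_finite_measure_axioms mu) := mu.

Variables (mu : set T -> \bar R) (mu_ax : sigma_finite_measure_axioms mu).

Let mu0 : measure_of_axioms mu_ax set0 = 0%E. Proof. by case: mu_ax. Qed.
Let mu_ge0 A : (0 <= measure_of_axioms mu_ax A)%E. Proof. by case: mu_ax. Qed.
Let mu_sigma_additive : semi_sigma_additive (measure_of_axioms mu_ax).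
Proof. by case: mu_ax. Qed.
HB.instance Definition _ := isMeasure.Build _ _ _ (measure_of_axioms mu_ax)
  mu0 mu_ge0 mu_sigma_additive.
Let mu_sigma_finite : sigma_finite setT (measure_of_axioms mu_ax).
Proof. by case: mu_ax. Qed.
HB.instance Definition _ := Measure_isSigmaFinite.Build _ _ _
  (measure_of_axioms mu_ax) mu_sigma_finite.

End sigma_finite_measure_of_axioms.

Section pushforward_sigma_finite.
Context d1 d2 (T1 : measurableType d1) (T2 : measurableType d2) (R : realType).
Variables (mu : {measure set T1 -> \bar R}) (f : T1 -> T2) (g : T2 -> T1).
Hypotheses (mu_sigma_finite : sigma_finite setT mu) (mf : measurable_fun setT f).
Hypotheses (mg : measurable_fun setT g) (fK : cancel f g).

Lemma pushforward_sigma_finite_measure_axioms :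
  sigma_finite_measure_axioms (pushforward mu f).
Proof.
have mpre A : measurable A -> measurable (f @^-1` A).
  by move=> mA; rewrite -[X in measurable X]setTI; exact: mf.
split.
- by rewrite /pushforward preimage_set0 measure0.
- by move=> A; exact: measure_ge0.
- move=> F mF tF mUF; rewrite /pushforward preimage_bigcup.
  apply: measure_semi_sigma_additive => [i|i j _ _ [y [Fiy Fjy]]|]; first exact: mpre.
  + by apply: (tF i j) => //; exists (f y).
  + by rewrite -preimage_bigcup; exact: mpre.
- have [F FT Ffin] := mu_sigma_finite.
  exists (fun k => g @^-1` F k); first by rewrite -preimage_bigcup -FT.
  move=> k; have [mFk Fk_fin] := Ffin k; split.
    by rewrite -[X in measurable X]setTI; exact: mg.
  by rewrite /pushforward (_ : f @^-1` _ = F k) //; apply/seteqP; split => y /=; rewrite fK.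
Qed.

End pushforward_sigma_finite.

Section product_measure1_sigma_finite.
Context d1 d2 (T1 : measurableType d1) (T2 : measurableType d2) (R : realType).
Variables (m1 : {sigma_finite_measure set T1 -> \bar R}).
Variables (m2 : {sigma_finite_measure set T2 -> \bar R}).

(* The library's sigma-finite instance for [\x] is not found by inference. *)
Lemma product_measure1_sigma_finite : sigma_finite setT (m1 \x m2)%E.
Proof.
have /sigma_finiteP[F [TF ndF Ffin]] := sigma_finiteT m1.
have /sigma_finiteP[G [TG ndG Gfin]] := sigma_finiteT m2.
exists (fun n => F n `*` G n).
  apply/seteqP; split => // -[x y] _.
  have [i _ Fix] : (\bigcup_i F i) x by rewrite -TF.
  have [j _ Gjy] : (\bigcup_j G j) y by rewrite -TG.
  exists (maxn i j) => //; split.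
  - by move: x Fix; exact/subsetPset/ndF/leq_maxl.
  - by move: y Gjy; exact/subsetPset/ndG/leq_maxr.
move=> k; have [mFk Fk_fin] := Ffin k; have [mGk Gk_fin] := Gfin k.
split; first exact: measurableX.
by rewrite product_measure1E // lte_mul_pinfty // ge0_fin_numE.
Qed.

End product_measure1_sigma_finite.

Section lebRd_measure.
Variable R : realType.

Definition tuple_of_pair n (p : R * n.-tuple R) : n.+1.-tuple R := [tuple of p.1 :: p.2].
Definition pair_of_tuple n (t : n.+1.-tuple R) : R * n.-tuple R :=
  (thead t, [tuple of behead t]).

Lemma measurable_tuple_of_pair n : measurable_fun setT (@tuple_of_pair n).
Proof. exact: measurable_cons. Qed.

Lemma measurable_pair_of_tuple n : measurable_fun setT (@pair_of_tuple n).
Proof.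
apply/measurable_fun_pairP; split; [exact: measurable_tnth | exact: measurable_behead].
Qed.

Lemma tuple_of_pairK n : cancel (@tuple_of_pair n) (@pair_of_tuple n).
Proof. by case=> x t; congr pair; apply/val_inj. Qed.

Lemma pair_of_tupleK n : cancel (@pair_of_tuple n) (@tuple_of_pair n).
Proof. by move=> t; apply/val_inj => /=; rewrite [in RHS](tuple_eta t). Qed.

Lemma lebRdS n (ax : sigma_finite_measure_axioms (@lebRd R n)) :
  @lebRd R n.+1 =
  pushforward ((@lebesgue_measure R) \x measure_of_axioms ax)%E (@tuple_of_pair n).
Proof.
apply/funext => A; apply: eq_integral => x _ /=.
by congr lebRd; apply/seteqP; split => t; rewrite /xsection /= in_setE.
Qed.

Lemma sigma_finite_measure_lebRd n : sigma_finite_measure_axioms (@lebRd R n).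
Proof.
elim: n => [|n ax]; last first.
  rewrite (lebRdS ax).
  apply: pushforward_sigma_finite_measure_axioms.
  - exact: product_measure1_sigma_finite.
  - exact: measurable_tuple_of_pair.
  - exact: measurable_pair_of_tuple.
  - exact: tuple_of_pairK.
have -> : @lebRd R 0 = \d_([tuple] : 0.-tuple R) by [].
split.
- exact: measure0.
- by move=> A; exact: measure_ge0.
- exact: measure_semi_sigma_additive.
- by apply: fin_num_fun_sigma_finite; [rewrite measure0 | move=> A _; rewrite diracE].
Qed.

End lebRd_measure.

Section lebRd_instance.
Variables (R : realType) (n : nat).
Let lebRd0 : @lebRd R n set0 = 0%E. Proof. by case: (sigma_finite_measure_lebRd R n). Qed.
Let lebRd_ge0 A : (0 <= @lebRd R n A)%E. Proof. by case: (sigma_finite_measure_lebRd R n). Qed.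
Let lebRd_sigma_additive : semi_sigma_additive (@lebRd R n).
Proof. by case: (sigma_finite_measure_lebRd R n). Qed.
HB.instance Definition _ := isMeasure.Build _ _ _ (@lebRd R n)
  lebRd0 lebRd_ge0 lebRd_sigma_additive.
End lebRd_instance.

Section cube.
Variable R : realType.

Definition cube n (a : nat -> R) (h : R) : set (n.-tuple R) :=
  [set t | forall i : 'I_n, a i <= tnth t i <= a i + h].
Arguments cube : clear implicits.

Lemma cube0 a h : cube 0 a h = setT.
Proof. by apply/seteqP; split => t // _ []. Qed.

Lemma cubeS n a h : @tuple_of_pair R n @^-1` cube n.+1 a h =
  `[a 0%N, a 0%N + h]%classic `*` cube n (a \o S) h.
Proof.
apply/seteqP; split => -[x t] /=.
  move=> xt; split; first by have := xt ord0; rewrite tnth0 in_itv.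
  by move=> i; have := xt (lift ord0 i); rewrite tnthS.
move=> [/= x_in ti] i; case: (unliftP ord0 i) => [j ->|->].
  by rewrite tnthS; exact: ti.
by move: x_in; rewrite in_itv tnth0.
Qed.

Lemma measurable_cube n a h : measurable (cube n a h).
Proof.
elim: n a => [|n IH] a.
  by rewrite cube0.
have -> : cube n.+1 a h = @pair_of_tuple R n @^-1` (@tuple_of_pair R n @^-1` cube n.+1 a h).
  by apply/seteqP; split => t /=; rewrite pair_of_tupleK.
rewrite -[X in measurable X]setTI; apply: measurable_pair_of_tuple => //.
by rewrite cubeS; apply: measurableX.
Qed.

Lemma lebRd_cube n a h : 0 <= h -> @lebRd R n (cube n a h) = (h ^+ n)%:E.
Proof.
move=> h0; elim: n a => [|n IH] a.
  by rewrite cube0 /= diracE in_setT.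
rewrite (lebRdS (sigma_finite_measure_lebRd R n)) /pushforward cubeS.
rewrite product_measure1E //; last exact: measurable_cube.
have lebesgue_itv : @lebesgue_measure R `[a 0%N, a 0%N + h]%classic = h%:E.
  rewrite lebesgue_measure_itv /= lte_fin ltrDl -EFinD addrAC subrr add0r.
  by case: ltP => // h_le0; have -> : h = 0 by apply/le_anti/andP.
by rewrite exprS EFinM -(IH (a \o S)); congr (_ * _)%E; exact: lebesgue_itv.
Qed.

End cube.
Arguments cube {R} n a h.

Section integral_lower_bound.
Context d (T : measurableType d) (R : realType).
Variables (mu : {measure set T -> \bar R}) (D : set T).
Hypotheses (mD : measurable D) (D_fin : (mu D < +oo)%E).

Lemma integrable_of_le_bound (f : T -> R) (c : R) : measurable_fun D f ->
  (forall y, D y -> `|f y| <= c) -> mu.-integrable D (EFin \o f).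
Proof.
move=> mf f_le; apply: measurable_bounded_integrable => //.
exists c; split; first exact: num_real.
by move=> M cM y Dy; exact: le_trans (f_le y Dy) (ltW cM).
Qed.

Lemma integral_cst_sub_indic (E : set T) (b c : R) : measurable E ->
  (\int[mu]_(y in D) (b - c * \1_E y)%:E =
    (b * fine (mu D) - c * fine (mu (E `&` D)))%:E)%E.
Proof.
move=> mE; have indic_le1 y : `|\1_E y : R| <= 1.
  by rewrite indicE normr_nat lern1 leq_b1.
have mind : measurable_fun D (\1_E : T -> R) by [].
have int_ind : mu.-integrable D (EFin \o (\1_E : T -> R)).
  exact: (@integrable_of_le_bound _ 1).
have ED_fin : (mu (E `&` D) < +oo)%E.
  by apply: le_lt_trans D_fin; apply: le_measure; rewrite ?inE //; exact: measurableI.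
under eq_integral do rewrite EFinB.
rewrite integralB_EFin //; first last.
- apply: (@integrable_of_le_bound _ `|c|) => [|y _]; first exact: measurable_funM.
  by rewrite normrM ler_piMr.
- exact: (@integrable_of_le_bound _ `|b|).
under [X in (_ - X)%E]eq_integral do rewrite EFinM.
rewrite (integral_cst _ mD b%:E) integralZl // integral_indic //.
by rewrite EFinB !EFinM !fineK // ge0_fin_numE.
Qed.

Lemma integral_ge_off_small_set (E : set T) (f : T -> R) (a b w m : R) :
  measurable E -> measurable_fun D f -> 0 <= a -> 0 <= b ->
  (forall y, D y -> `|f y| <= a) -> (forall y, D y -> ~ E y -> b <= f y) ->
  (w%:E <= mu D)%E -> (mu (E `&` D) <= m%:E)%E ->
  ((b * w - (a + b) * m)%:E <= \int[mu]_(y in D) (f y)%:E)%E.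
Proof.
move=> mE mf a_ge0 b_ge0 f_le f_ge w_le m_ge.
have g_le_f y : D y -> b - (a + b) * \1_E y <= f y.
  move=> Dy; rewrite indicE; have := f_le y Dy; rewrite ler_norml.
  case: (pselect (E y)) => Ey; first by rewrite mem_set //=; lra.
  by rewrite memNset //=; have := f_ge y Dy Ey; lra.
have ED_le_D : (mu (E `&` D) <= mu D)%E.
  by apply: le_measure; rewrite ?inE //; exact: measurableI.
apply: le_trans (_ : _ <= \int[mu]_(y in D) (b - (a + b) * \1_E y)%:E)%E _.
  rewrite integral_cst_sub_indic // lee_fin lerB // ler_wpM2l ?addr_ge0 //.
    by rewrite -lee_fin fineK // ge0_fin_numE.
  by rewrite -lee_fin fineK // ge0_fin_numE // (le_lt_trans ED_le_D).
apply: le_integral => //; last by move=> y /set_mem Dy; rewrite lee_fin g_le_f.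
- apply: (@integrable_of_le_bound _ (a + b)) => [|y Dy].
    by apply: measurable_funB => //; apply: measurable_funM => //.
  rewrite indicE ler_norml; have := f_le y Dy; rewrite ler_norml.
  by case: (pselect (E y)) => Ey; [rewrite mem_set | rewrite memNset] => //=; lra.
- exact: (@integrable_of_le_bound f a).
Qed.
End integral_lower_bound.

Section powR_annulus.
Variable R : realType.

Lemma powRN_annulus (p r rho : R) : 0 <= p -> 0 < r -> r / 2 <= rho <= r ->
  r `^ (- p) <= rho `^ (- p) <= 2 `^ p * r `^ (- p).
Proof.
move=> p_ge0 r_gt0 /andP[rho_ge rho_le]; have rho_gt0 : 0 < rho by lra.
have rho_p_le : rho `^ p <= r `^ p.
  by apply: ge0_ler_powR => //; rewrite nnegrE; lra.
have r_p_le : r `^ p <= 2 `^ p * rho `^ p.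
  by rewrite -powRM ?(ltW rho_gt0) //; apply: ge0_ler_powR => //; rewrite ?nnegrE; lra.
rewrite !powRN lef_pV2 ?posrE ?powR_gt0 // rho_p_le /=.
by rewrite ler_pdivlMr ?powR_gt0 // mulrC ler_pdivrMr ?powR_gt0.
Qed.

Lemma powR_natD (r s : R) (n : nat) : 0 < r -> r `^ (n%:R + s) = r ^+ n * r `^ s.
Proof.
move=> r_gt0; rewrite powRD ?powR_mulrn ?ltW //.
by apply/implyP => _; rewrite gt_eqF.
Qed.

End powR_annulus.

Section euclidean.
Variables (R : realType) (d : nat).
Implicit Types (t x y z : d.-tuple R) (r : R).

Lemma tnth_tsub x y i : tnth (tsub x y) i = tnth x i - tnth y i.
Proof. exact: tnth_mktuple. Qed.

Lemma enorm_tsubC x y : enorm (tsub x y) = enorm (tsub y x).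
Proof.
by congr Num.sqrt; apply: eq_bigr => i _; rewrite !tnth_tsub -opprB sqrrN.
Qed.

Lemma enorm_ltE t r : 0 < r -> (enorm t < r) = (\sum_(i < d) tnth t i ^+ 2 < r ^+ 2).
Proof.
move=> r_gt0; rewrite /enorm -{1}(ger0_norm (ltW r_gt0)) -sqrtr_sqr ltr_sqrt //.
exact: exprn_gt0.
Qed.

Lemma enorm_tzero : enorm (@tzero R d) = 0.
Proof. by rewrite /enorm big1 ?sqrtr0 // => i _; rewrite tnth_mktuple expr0n. Qed.

Lemma normr_tnth_le_enorm t i : `|tnth t i| <= enorm t.
Proof.
rewrite /enorm -sqrtr_sqr; apply: ler_wsqrtr.
by rewrite (bigD1 i) //= lerDl; apply: sumr_ge0 => j _; exact: sqr_ge0.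
Qed.

Lemma measurable_tsub x : measurable_fun setT (tsub x).
Proof.
apply/measurable_fun_tnthP => i.
rewrite (_ : _ \o _ = fun y => tnth x i - tnth y i); last first.
  by apply/funext => y; rewrite /= tnth_tsub.
by apply: measurable_funB => //; exact: measurable_tnth.
Qed.

Lemma measurable_eball x r : 0 < r -> measurable (eball x r).
Proof.
move=> r_gt0.
have -> : eball x r = (fun y => \sum_(i < d) tnth (tsub x y) i ^+ 2) @^-1`
    `]-oo, r ^+ 2[%classic.
  by apply/seteqP; split => y; rewrite /eball /= enorm_tsubC enorm_ltE // in_itv.
rewrite -[X in measurable X]setTI; apply: measurable_sum => // i.
apply: measurable_funX; exact: measurableT_comp (measurable_tnth i) (measurable_tsub x).
Qed.

Lemma measurable_annulus x r : 0 < r -> measurable (eball x r `\` eball x (r / 2)).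
Proof. by move=> r_gt0; apply: measurableD; apply: measurable_eball => //; lra. Qed.

Lemma eball_sub_cube x r :
  eball x r `<=` cube d (fun i => nth 0 x i - r) (2 * r).
Proof.
move=> y xy i; have := le_lt_trans (normr_tnth_le_enorm _ i) xy.
by rewrite tnth_tsub (tnth_nth 0 x) ltr_norml => /andP[? ?]; apply/andP; split; lra.
Qed.

Lemma cube_sub_annulus x r : (0 < d)%N -> 0 < r ->
  cube d (fun i => nth 0 x i + (i == 0%N)%:R * (r / 2)) (r / (4 * d%:R))
  `<=` eball x r `\` eball x (r / 2).
Proof.
move=> d_gt0 r_gt0 y y_cube; pose i0 := Ordinal d_gt0.
set h := r / (4 * d%:R); pose u i := tnth (tsub y x) i.
have d_ge1 : 1 <= (d%:R : R) by rewrite ler1n.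
have dh : d%:R * h = r / 4 by rewrite /h; field; lra.
have h_ge0 : 0 <= h by rewrite /h divr_ge0 //; lra.
have u_bounds i : (i == i0)%:R * (r / 2) <= u i <= (i == i0)%:R * (r / 2) + h.
  have := y_cube i; rewrite -/h /u tnth_tsub (tnth_nth 0 x).
  by rewrite -(inj_eq val_inj) /= => /andP[? ?]; apply/andP; split; lra.
have [u0_ge u0_le] : r / 2 <= u i0 /\ u i0 <= r / 2 + h.
  by have := u_bounds i0; rewrite eqxx mul1r => /andP.
have rest_ge0 : 0 <= \sum_(i < d | i != i0) u i ^+ 2.
  by apply: sumr_ge0 => i _; exact: sqr_ge0.
have rest_le : \sum_(i < d | i != i0) u i ^+ 2 <= d%:R * h ^+ 2.
  apply: (@le_trans _ _ (\sum_(i < d) h ^+ 2)); last by rewrite sumr_const card_ord mulr_natl.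
  rewrite [leRHS](bigD1 i0) //= ler_wpDl ?sqr_ge0 // ler_sum // => i /negbTE ii0.
  by have := u_bounds i; rewrite ii0 mul0r add0r => /andP[? ?]; rewrite ler_sqr ?nnegrE.
have sum_split : \sum_(i < d) tnth (tsub y x) i ^+ 2 =
    u i0 ^+ 2 + \sum_(i < d | i != i0) u i ^+ 2 by rewrite (bigD1 i0).
(* r^2/4 <= u_0^2 <= |u|^2 <= (r/2 + h)^2 + d h^2 <= 10 r^2/16 since d h = r/4. *)
have dh2 : d%:R * h ^+ 2 <= r ^+ 2 / 16.
  by rewrite expr2 mulrA dh -(mulr1 (r ^+ 2 / 16)); nra.
split; first by rewrite /eball /= enorm_ltE // sum_split; nra.
rewrite /eball /= enorm_ltE ?sum_split; last lra.
by apply/negP; rewrite -leNgt; nra.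
Qed.

Lemma lebRd_eball_le x r : 0 < r -> (lebRd (eball x r) <= ((2 * r) ^+ d)%:E)%E.
Proof.
move=> r_gt0; rewrite -(@lebRd_cube _ _ (fun i => nth 0 x i - r)); last lra.
apply: le_measure; rewrite ?inE; [exact: measurable_eball | exact: measurable_cube |].
exact: eball_sub_cube.
Qed.

Lemma lebRd_annulus_ge x r : (0 < d)%N -> 0 < r ->
  (((r / (4 * d%:R)) ^+ d)%:E <= lebRd (eball x r `\` eball x (r / 2)))%E.
Proof.
move=> d_gt0 r_gt0.
rewrite -(@lebRd_cube _ _ (fun i => nth 0 x i + (i == 0%N)%:R * (r / 2))); last first.
  by apply: divr_ge0; [exact: ltW | exact: mulr_ge0].
apply: le_measure; rewrite ?inE; [exact: measurable_cube | |exact: cube_sub_annulus].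
exact: measurable_annulus.
Qed.

Lemma lebRd_annulus_lty x r : 0 < r ->
  (lebRd (eball x r `\` eball x (r / 2)) < +oo)%E.
Proof.
move=> r_gt0; apply: le_lt_trans _ (le_lt_trans (lebRd_eball_le x r_gt0) (ltry _)).
apply: le_measure; rewrite ?inE; [|exact: measurable_eball|exact: subDsetl].
exact: measurable_annulus.
Qed.

Lemma lebRd_setI_annulus_le (E : set (d.-tuple R)) x z r (gamma : R) :
  measurable E -> 0 <= gamma -> 0 < r ->
  (lebRd (E `&` eball x r) <= gamma%:E * lebRd (eball z r))%E ->
  (lebRd (E `&` (eball x r `\` eball x (r / 2))) <= (gamma * (2 * r) ^+ d)%:E)%E.
Proof.
move=> mE gamma_ge0 r_gt0 E_small.
have mB : measurable (eball x r) by exact: measurable_eball.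
apply: (@le_trans _ _ (lebRd (E `&` eball x r))).
  apply: le_measure; rewrite ?inE; [| exact: measurableI | apply: setIS; exact: subDsetl].
  by apply: measurableI => //; exact: measurable_annulus.
apply: (le_trans E_small); rewrite [in leRHS]EFinM; apply: lee_wpmul2l.
  by rewrite lee_fin.
exact: lebRd_eball_le.
Qed.

Lemma kernel_annulus_bounds (K : d.-tuple R -> R) (lam Lam p : R) x y r :
  0 <= lam -> 0 <= Lam -> 0 <= p -> 0 < r ->
  (forall z, z <> @tzero R d ->
     lam * enorm z `^ (- p) <= K z /\ K z <= Lam * enorm z `^ (- p)) ->
  (eball x r `\` eball x (r / 2)) y ->
  lam * r `^ (- p) <= K (tsub x y) <= Lam * 2 `^ p * r `^ (- p).
Proof.
move=> lam_ge0 Lam_ge0 p_ge0 r_gt0 K_bounds.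
rewrite /eball /= -!(enorm_tsubC x y) => -[xy_lt /negP]; rewrite -leNgt => xy_ge.
have xy_ne0 : tsub x y <> @tzero R d.
  by move=> xy0; move: xy_ge; rewrite xy0 enorm_tzero; lra.
have [K_ge K_le] := K_bounds _ xy_ne0.
have /andP[rp_le rp_ge] := powRN_annulus p_ge0 r_gt0 (introT andP (conj xy_ge (ltW xy_lt))).
apply/andP; split; first exact: le_trans (ler_wpM2l lam_ge0 rp_le) K_ge.
by rewrite -mulrA; exact: le_trans K_le (ler_wpM2l Lam_ge0 rp_ge).
Qed.

End euclidean.

Section tchi.
Variables (R : realType) (d : nat) (E : set (d.-tuple R)).

Lemma tchi_notin y : ~ E y -> tchi E y = 1.
Proof. by move=> Ey; rewrite /tchi asboolF. Qed.

Lemma normr_tchi y : `|tchi E y| = 1.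
Proof. by rewrite /tchi; case: ifP; rewrite ?normrN normr1. Qed.

Lemma measurable_tchi : measurable E -> measurable_fun setT (tchi E).
Proof.
move=> mE; have -> : tchi E = fun y => 1 - 2 * \1_E y.
  apply/funext => y; rewrite /tchi indicE.
  case: (pselect (E y)) => Ey; first by rewrite asboolT // mem_set //=; lra.
  by rewrite asboolF // memNset //=; lra.
apply: measurable_funB => //; apply: measurable_funM => //; exact: measurable_indic.
Qed.

End tchi.

Theorem lemma4p1 (R : realType) (d : nat) (s lam Lam : R) :
  (1 <= d)%N -> 0 < s -> s < 1 -> 0 < lam -> lam <= Lam ->
  exists C : R, exists gamma : R, 0 < C /\ 0 < gamma /\
    forall (K : d.-tuple R -> R) (E : set (d.-tuple R)) (x : d.-tuple R) (r : R),
      measurable_fun [set: d.-tuple R] K ->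
      (forall y, y <> @tzero R d ->
         lam * enorm y `^ (- (d%:R + s)) <= K y /\
         K y <= Lam * enorm y `^ (- (d%:R + s))) ->
      (forall y, y <> @tzero R d ->
         K y = K [tuple - tnth y i | i < d]) ->
      measurable E ->
      eboundary E x ->
      0 < r ->
      (@lebRd R d (E `&` eball x r) <= gamma%:E * @lebRd R d (eball (@tzero R d) r))%E ->
      ((C / r `^ s)%:E <=
        \int[@lebRd R d]_(y in eball x r `\` eball x (r / 2))
           (tchi E y * K (tsub x y))%:E)%E.
Proof.
move=> d_gt0 s_gt0 _ lam_gt0 lam_le_Lam.
pose p := d%:R + s; pose A := Lam * 2 `^ p + lam; pose c := lam / (4 * d%:R) ^+ d.
have p_ge0 : 0 <= p by rewrite addr_ge0 // ltW.
have c_gt0 : 0 < c by rewrite divr_gt0 // exprn_gt0 // mulr_gt0 // ltr0n.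
have A_gt0 : 0 < A by rewrite addr_gt0 // mulr_gt0 ?powR_gt0 //; lra.
(* gamma makes (a + b) gamma (2r)^d exactly half of b (r/(4d))^d. *)
pose gamma := c / (2 * A * 2 ^+ d).
have gamma_gt0 : 0 < gamma by rewrite divr_gt0 // !mulr_gt0 // exprn_gt0.
exists (c / 2), gamma; split; first by rewrite divr_gt0.
split => // K E x r mK K_bounds _ mE _ r_gt0 E_small.
have K_annulus := kernel_annulus_bounds (ltW lam_gt0) (ltW (lt_le_trans lam_gt0 lam_le_Lam))
  p_ge0 r_gt0 K_bounds.
have b_ge0 : 0 <= lam * r `^ (- p) by rewrite mulr_ge0 ?powR_ge0 ?ltW.
apply: le_trans (integral_ge_off_small_set (a := Lam * 2 `^ p * r `^ (- p))
  _ (lebRd_annulus_lty x r_gt0) mE _ _ b_ge0 _ _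
  (lebRd_annulus_ge x d_gt0 r_gt0) (lebRd_setI_annulus_le mE (ltW gamma_gt0) r_gt0 E_small)).
- rewrite lee_fin le_eqVlt; apply/orP; left; apply/eqP.
  rewrite powRN powR_natD // !exprMn exprVn /gamma /c /A.
  field; rewrite -/A gt_eqF //= !expf_neq0 ?gt_eqF ?powR_gt0 //.
  by rewrite mulr_gt0 // ltr0n.
- exact: measurable_annulus.
- apply: measurable_funTS; apply: measurable_funM; first exact: measurable_tchi.
  exact: measurableT_comp mK (measurable_tsub x).
- by rewrite !mulr_ge0 ?powR_ge0 //; lra.
- move=> y /K_annulus /andP[K_ge K_le].
  by rewrite normrM normr_tchi mul1r ger0_norm //; exact: le_trans b_ge0 K_ge.
- by move=> y /K_annulus /andP[K_ge _] Ey; rewrite tchi_notin // mul1r.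
Qed.
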